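(* Let $X$ be uniformly distributed on $[-\pi,\pi]$. Set $\varphi_0\equiv 1$, $\varphi_{2k}(x)=\sqrt{2}\cos(kx)$ and $\varphi_{2k+1}(x)=\sqrt{2}\sin(kx)$ for $k\geq 1$, and for $l\in\mathbb{N}$ let $m_D=\mathrm{Span}\{\varphi_j : j=0,\dots,2l\}$, of linear dimension $D=2l+1$. If $m_D$ satisfies the small-ball condition with constants $(\beta_0,\kappa_0)$, i.e. $\mathbb{P}(|s(X)|\geq\kappa_0\|s\|_2)\geq\beta_0$ for every $s\in m_D$ (with $\kappa_0,\beta_0>0$), then \[ \beta_0\leq C\,\kappa_0^{-1/2}D^{-3/4} \] for some absolute constant $C>0$ (the paper states that $C=3^{1/4}\sqrt{2}$ works).
   Context: $\|\cdot\|_2$ denotes the norm of $L_2(P^X)$, $P^X$ being the uniform distribution on $[-\pi,\pi]$. *)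

From HB Require Import structures.
From mathcomp Require Import all_boot all_order all_algebra.
From mathcomp Require Import all_classical all_reals all_analysis.
Set Implicit Arguments. Unset Strict Implicit. Unset Printing Implicit Defensive.
Import Order.TTheory GRing.Theory Num.Theory.
Local Open Scope classical_set_scope.
Local Open Scope ring_scope.

Lemma Npi_lt_pi (R : realType) : - pi < pi :> R.
Proof. by rewrite gtrN // pi_gt0. Qed.

Definition PX (R : realType) := uniform_prob (Npi_lt_pi R).
Arguments PX : clear implicits.

Definition phi (R : realType) (j : nat) (x : R) : R :=
  if j == 0%N then 1
  else if ~~ odd j then Num.sqrt 2 * cos ((j./2)%:R * x)
  else Num.sqrt 2 * sin ((j./2)%:R * x).

(* general element of m_D = Span{phi_0, 1 <= k <= l : cos (k x), sin (k x)},
   given by its coefficients a0, b_k (cosine), c_k (sine), 1 <= k <= l *)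
Definition trig_elem (R : realType) (l : nat) (a0 : R) (b c : nat -> R) (x : R) : R :=
  a0 * phi 0 x + \sum_(1 <= k < l.+1) (b k * phi (2 * k) x + c k * phi (2 * k + 1) x).

Definition norm2 (R : realType) (s : R -> R) : \bar R :=
  Lnorm (PX R) 2%:E (fun x => (s x)%:E).

Definition small_ball (R : realType) (l : nat) (beta0 kappa0 : R) : Prop :=
  forall (a0 : R) (b c : nat -> R),
    (beta0%:E <= PX R [set x | (kappa0%:E * norm2 (trig_elem l a0 b c)
                                 <= `|trig_elem l a0 b c x|%:E)%E])%E.

From HB Require Import structures.
From mathcomp Require Import all_boot all_order all_algebra.
From mathcomp Require Import all_classical all_reals all_analysis.
From mathcomp Require Import ring lra measurable_realfun.

Set Implicit Arguments.
Unset Strict Implicit.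
Unset Printing Implicit Defensive.
Import Order.TTheory GRing.Theory Num.Theory numFieldNormedType.Exports.
Local Open Scope classical_set_scope.
Local Open Scope ring_scope.

(* The small-ball condition is tested on the Fejer kernel F_n, n = l + 1,
   which lies in m_D and satisfies (1 - cos x) F_n(x) = 1 - cos (n x).
   Near 0 this gives F_n >= 2 n^2 / 3 on [-1/n, 1/n], hence
   ||F_n||_2 >= (4 n^3 / (9 pi))^(1/2).  Away from 0 it gives
   |F_n(x)| <= 2 / (1 - cos x) <= 6 pi^2 / x^2 on [-pi, pi], so the event
   |F_n(X)| >= t forces |X| <= pi (6 / t)^(1/2) and has probability at most
   (6 / t)^(1/2).  With t = kappa0 ||F_n||_2 this bounds beta0 by
   O(kappa0^(-1/2) n^(-3/4)). *)

Section trigonometry.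
Variable R : realType.
Implicit Types y z : R.

Lemma normr_sin_le y : `|sin y| <= `|y|.
Proof.
wlog y0 : y / 0 <= y.
  move=> H; case: (leP 0 y) => [/H//|y0].
  by rewrite -normrN -sinN -(normrN y) H // oppr_ge0 ltW.
have [c _] := @MVT_segment R sin cos 0 y y0 (fun x _ => is_derive_sin x)
  (continuous_subspaceT (@continuous_sin R)).
by rewrite sin0 !subr0 => ->; rewrite normrM ler_piMl // cos_max.
Qed.

Lemma mulr_cos_le_sin z : 0 <= z <= pi -> z * cos z <= sin z.
Proof.
move=> /andP[z0 zpi].
have [c] := @MVT_segment R sin cos 0 z z0
  (fun x _ => is_derive_sin x) (continuous_subspaceT (@continuous_sin R)).
rewrite in_itv /= => /andP[c0 cz]; rewrite sin0 !subr0 => ->.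
rewrite mulrC ler_wpM2r //.
rewrite leNgt ltr_cos ?in_itv /= ?c0 ?z0 ?zpi ?(le_trans cz zpi) //.
by rewrite -leNgt.
Qed.

Lemma one_sub_cos y : 1 - cos y = 2 * sin (y / 2) ^+ 2.
Proof.
have {1}-> : y = y / 2 *+ 2 by rewrite -mulr_natr divfK.
rewrite cos_mulr2n cos2sin2; ring.
Qed.

Lemma one_sub_cos_le y : 1 - cos y <= y ^+ 2 / 2.
Proof.
have : sin (y / 2) ^+ 2 <= (y / 2) ^+ 2.
  by rewrite -real_normK ?num_real // -[(y / 2) ^+ 2]real_normK ?num_real
    // lerXn2r ?nnegrE // normr_sin_le.
rewrite one_sub_cos; lra.
Qed.

Lemma one_sub_cos_ge_small y : `|y| <= 1 -> y ^+ 2 / 3 <= 1 - cos y.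
Proof.
rewrite -cos_norm -(real_normK (num_real y)) one_sub_cos.
set z := `|y| / 2; have -> : `|y| = 2 * z by rewrite /z; field.
have pi2 := pi_ge2 R.
move=> z1; have z0 : 0 <= z by rewrite divr_ge0.
have zcos : z * cos z <= sin z by apply: mulr_cos_le_sin; rewrite z0 /=; lra.
have cosz : 7 / 8 <= cos z by have := one_sub_cos_le z; nra.
have sinz : z * (7 / 8) <= sin z := le_trans (ler_wpM2l z0 cosz) zcos.
have : (z * (7 / 8)) ^+ 2 <= sin z ^+ 2 by rewrite lerXn2r ?nnegrE; nra.
nra.
Qed.

Lemma one_sub_cos_ge y : `|y| <= pi -> y ^+ 2 / (3 * pi ^+ 2) <= 1 - cos y.
Proof.
move=> ypi; have pi2 := pi_ge2 R.
have y2pi : y ^+ 2 <= pi ^+ 2.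
  by rewrite -real_normK ?num_real // lerXn2r ?nnegrE // pi_ge0.
have pi2_gt0 : 0 < 3 * pi ^+ 2 :> R by nra.
rewrite ler_pdivrMr //.
have [y1|y1] := leP `|y| 1.
  have := one_sub_cos_ge_small y1.
  have : (1 - cos y) * 3 <= (1 - cos y) * (3 * pi ^+ 2).
    by rewrite ler_wpM2l ?subr_ge0 ?cos_le1 //; nra.
  lra.
have cos1 : cos y <= cos 1.
  rewrite -cos_norm leNgt ltr_cos ?in_itv /= ?normr_ge0 ?ypi //; last by lra.
  by rewrite -leNgt ltW.
have := @one_sub_cos_ge_small 1; rewrite normr1 expr1n => /(_ (lexx _)) cos1_le.
have : 1 / 3 * (3 * pi ^+ 2) <= (1 - cos y) * (3 * pi ^+ 2).
  by apply: ler_wpM2r; [exact: ltW | lra].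
lra.
Qed.

End trigonometry.

Section fejer_kernel.
Variable R : realType.
Implicit Types x t : R.

Definition dirichlet_kernel n x : R :=
  1 + 2 * \sum_(1 <= k < n.+1) cos (k%:R * x).

(* Unnormalised: fejer_kernel n is the sum of dirichlet_kernel k for k < n. *)
Definition fejer_kernel n x : R :=
  n%:R + 2 * \sum_(1 <= k < n) (n%:R - k%:R) * cos (k%:R * x).

Lemma dirichlet_kernelS n x :
  dirichlet_kernel n.+1 x = dirichlet_kernel n x + 2 * cos (n.+1%:R * x).
Proof. by rewrite /dirichlet_kernel big_nat_recr //=; ring. Qed.

Lemma dirichlet_kernel0 n : dirichlet_kernel n 0 = 2 * n%:R + 1.
Proof.
elim: n => [|n IH]; first by rewrite /dirichlet_kernel big_geq //; ring.
by rewrite dirichlet_kernelS IH mulr0 cos0 -addn1 natrD; ring.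
Qed.

Lemma fejer_kernelS n x :
  fejer_kernel n.+1 x = fejer_kernel n x + dirichlet_kernel n x.
Proof.
have extend : \sum_(1 <= k < n) (n%:R - k%:R) * cos (k%:R * x) =
    \sum_(1 <= k < n.+1) (n%:R - k%:R) * cos (k%:R * x).
  case: n => [|n]; first by rewrite !big_geq.
  by rewrite [RHS]big_nat_recr //= subrr mul0r addr0.
rewrite /fejer_kernel /dirichlet_kernel extend.
have -> : \sum_(1 <= k < n.+1) (n.+1%:R - k%:R) * cos (k%:R * x) =
    \sum_(1 <= k < n.+1) ((n%:R - k%:R) * cos (k%:R * x) + cos (k%:R * x)).
  by apply: eq_bigr => k _; rewrite -addn1 natrD; ring.
by rewrite big_split /= -addn1 natrD; ring.
Qed.

Lemma fejer_kernel0 n : fejer_kernel n 0 = n%:R ^+ 2.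
Proof.
elim: n => [|n IH]; first by rewrite /fejer_kernel big_geq //; ring.
by rewrite fejer_kernelS IH dirichlet_kernel0 -addn1 natrD; ring.
Qed.

Lemma one_sub_cos_mul_dirichlet_kernel n x :
  (1 - cos x) * dirichlet_kernel n x = cos (n%:R * x) - cos (n.+1%:R * x).
Proof.
elim: n => [|n IH].
  by rewrite /dirichlet_kernel big_geq // mul0r cos0 mul1r; ring.
rewrite dirichlet_kernelS mulrDr IH.
have -> : n.+2%:R * x = n.+1%:R * x + x by rewrite -addn1 natrD; ring.
have -> : n%:R * x = n.+1%:R * x - x by rewrite -addn1 natrD; ring.
rewrite cosB cosD; ring.
Qed.

Lemma one_sub_cos_mul_fejer_kernel n x :
  (1 - cos x) * fejer_kernel n x = 1 - cos (n%:R * x).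
Proof.
elim: n => [|n IH]; first by rewrite /fejer_kernel big_geq // mul0r cos0; ring.
by rewrite fejer_kernelS mulrDr IH one_sub_cos_mul_dirichlet_kernel; ring.
Qed.

Lemma normr_fejer_kernel_mul_le n x : `|fejer_kernel n x| * (1 - cos x) <= 2.
Proof.
have cosx : 0 <= 1 - cos x by rewrite subr_ge0 cos_le1.
rewrite -(ger0_norm cosx) -normrM mulrC one_sub_cos_mul_fejer_kernel.
have := cos_le1 (n%:R * x); have := cos_geN1 (n%:R * x).
by rewrite ler_norml; lra.
Qed.

Lemma fejer_kernel_ge n x : (0 < n)%N -> `|x| <= n%:R^-1 ->
  2 / 3 * n%:R ^+ 2 <= fejer_kernel n x.
Proof.
move=> n_gt0 xn; have n1 : 1 <= n%:R :> R by rewrite ler1n.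
have [->|x0] := eqVneq x 0.
  by rewrite fejer_kernel0; have := sqr_ge0 (n%:R : R); lra.
have x1 : `|x| <= 1 by apply: le_trans xn _; rewrite invf_le1 //; lra.
have nx1 : `|n%:R * x| <= 1.
  by rewrite normrM ger0_norm ?ler0n // mulrC -ler_pdivlMr ?mul1r //; lra.
have cosx_gt0 : 0 < 1 - cos x.
  apply: lt_le_trans (one_sub_cos_ge_small x1).
  by rewrite divr_gt0 // lt_def sqrf_eq0 x0 sqr_ge0.
rewrite -(ler_pM2l cosx_gt0) one_sub_cos_mul_fejer_kernel.
apply: le_trans (one_sub_cos_ge_small nx1).
have := one_sub_cos_le x; have := sqr_ge0 (n%:R : R); rewrite exprMn; nra.
Qed.

Lemma normr_le_of_fejer_kernel_ge n x t : 0 < t -> `|x| <= pi ->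
  t <= `|fejer_kernel n x| -> `|x| <= pi * Num.sqrt (6 / t).
Proof.
move=> t_gt0 xpi tF.
have pi2_gt0 : 0 < pi ^+ 2 :> R by rewrite exprn_gt0 ?pi_gt0.
have : t * (x ^+ 2 / (3 * pi ^+ 2)) <= 2.
  apply: le_trans (normr_fejer_kernel_mul_le n x).
  apply: ler_pM (ltW t_gt0) _ tF (one_sub_cos_ge xpi).
  by rewrite divr_ge0 ?sqr_ge0 // ltW // mulr_gt0.
rewrite mulrA ler_pdivrMr; last by rewrite mulr_gt0.
move=> x2.
rewrite -(ler_pXn2r (_ : 0 < 2)%N) ?nnegrE ?mulr_ge0 ?pi_ge0 ?sqrtr_ge0 //.
rewrite real_normK ?num_real // exprMn sqr_sqrtr ?divr_ge0 ?(ltW t_gt0) //.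
by rewrite mulrA ler_pdivlMr //; lra.
Qed.

Lemma measurable_fejer_kernel n : measurable_fun setT (fejer_kernel n).
Proof.
apply: measurable_funD => //; apply: measurable_funM => //.
apply: measurable_sum => k; apply: measurable_funM => //.
apply: measurableT_comp.
  exact: continuous_measurable_fun (@continuous_cos R).
exact: measurable_funM.
Qed.

Lemma trig_elem_fejer_kernel l :
  trig_elem l l.+1%:R (fun k => Num.sqrt 2 * (l.+1%:R - k%:R)) (fun=> 0) =
  fejer_kernel l.+1.
Proof.
apply/funext => x; rewrite /trig_elem /fejer_kernel /phi eqxx mulr1.
congr (_ + _); rewrite big_distrr /=; apply: eq_big_nat => k /andP[k1 _].
rewrite mul0r addr0 muln_eq0 /= eqn0Ngt k1 oddM /= mul2n doubleK.
by rewrite mulrACA -expr2 sqr_sqrtr.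
Qed.

End fejer_kernel.

Section uniform_distribution.
Variable R : realType.

Lemma uniform_prob_itv (a b c d : R) (ab : a < b) : a <= c -> c <= d -> d <= b ->
  uniform_prob ab `[c, d]%classic = ((d - c) / (b - a))%:E.
Proof.
move=> ac cd db; rewrite /uniform_prob (eq_integral (cst ((b - a)^-1)%:E)).
  rewrite integral_cst //.
  change (((b - a)^-1)%:E * (@lebesgue_measure R) `[c, d]%classic =
    ((d - c) / (b - a))%:E)%E.
  rewrite lebesgue_measure_itv /= lte_fin.
  have [_|dc] := ltP c d; first by rewrite -EFinB -EFinM mulrC.
  have -> : d = c by apply/le_anti; rewrite cd dc.
  by rewrite subrr mul0r mule0.
move=> x; rewrite inE /= in_itv /= => /andP[cx xd].
by rewrite /uniform_pdf (le_trans ac cx) (le_trans xd db).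
Qed.

Lemma PX_centered_itv (r : R) :
  0 <= r <= pi -> PX R `[- r, r]%classic = (r / pi)%:E.
Proof.
move=> /andP[r0 rpi]; have pi_gt0 := pi_gt0 R.
rewrite /PX uniform_prob_itv ?lerN2 //; last by rewrite (le_trans _ r0) // oppr_le0.
rewrite !opprK -!mulr2n -(mulr_natr r) -(mulr_natr pi).
by rewrite invfM mulrACA divff ?mulr1.
Qed.

Lemma PX_le_of_bounded (A : set R) (r : R) : measurable A -> 0 <= r ->
  (forall x, - pi <= x <= pi -> A x -> `|x| <= r) -> (PX R A <= (r / pi)%:E)%E.
Proof.
move=> mA r0 Ar; have pi_gt0 := pi_gt0 R.
have [rpi|pir] := leP r pi; last first.
  apply: le_trans (probability_le1 (PX R) mA) _.
  by rewrite lee_fin ler_pdivlMr // mul1r ltW.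
have -> : PX R A = PX R (A `&` `[- pi, pi]%classic) by exact: integral_uniform_pdf.
rewrite -PX_centered_itv ?r0 //; apply: le_measure; rewrite ?inE //.
  exact: measurableI.
move=> x [Ax]; rewrite /= !in_itv /= -!ler_norml => xpi.
by apply: Ar; rewrite // -ler_norml.
Qed.

Lemma norm2_ge_itv (s : R -> R) (a r : R) : measurable_fun setT s -> 0 <= a ->
  0 <= r <= pi -> (forall x, - r <= x <= r -> a <= `|s x|) ->
  ((Num.sqrt (a ^+ 2 * (r / pi)))%:E <= norm2 s)%E.
Proof.
move=> ms a0 rpi sa; have /andP[r0 _] := rpi.
have ar0 : 0 <= a ^+ 2 * (r / pi) by rewrite mulr_ge0 ?sqr_ge0 ?divr_ge0 ?pi_ge0.
have ms2 : measurable_fun setT (fun x => (`|s x| ^+ 2)%:E).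
  by apply/measurable_EFinP/measurable_funX; exact: measurableT_comp.
rewrite /norm2 unlock /= -powR12_sqrt // -poweR_EFin.
apply: gt0_ler_poweR; first by rewrite invr_ge0.
- by rewrite in_itv /= lee_fin leey ar0.
- by rewrite in_itv /= leey andbT integral_ge0 // => x _; rewrite lee_fin powR_ge0.
under eq_integral do rewrite powR_mulrn ?normr_ge0 //.
have sub_itv : (\int[PX R]_(x in `[(- r)%R, r]%classic) (`|s x| ^+ 2)%:E <=
    \int[PX R]_x (`|s x| ^+ 2)%:E)%E.
  by apply: ge0_subset_integral => // x _; rewrite lee_fin sqr_ge0.
apply: le_trans sub_itv.
rewrite EFinM -(PX_centered_itv rpi) -integral_cst //.
apply: ge0_le_integral => //.
- by move=> x _; rewrite lee_fin sqr_ge0.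
- exact: measurable_funTS.
- move=> x; rewrite /= in_itv /= => xr.
  by rewrite lee_fin lerXn2r ?nnegrE ?normr_ge0 // sa.
Qed.

End uniform_distribution.

Section small_ball_fejer_kernel.
Variable R : realType.

Lemma norm2_fejer_kernel_ge n : (0 < n)%N ->
  ((Num.sqrt (4 / 9 * n%:R ^+ 3 / pi))%:E <= norm2 (@fejer_kernel R n))%E.
Proof.
move=> n_gt0; have n1 : 1 <= n%:R :> R by rewrite ler1n.
have -> : 4 / 9 * n%:R ^+ 3 / pi = (2 / 3 * n%:R ^+ 2) ^+ 2 * (n%:R^-1 / pi) :> R.
  by rewrite mulrA; congr (_ / _); field; lra.
apply: norm2_ge_itv (measurable_fejer_kernel n) _ _ _.
- by rewrite mulr_ge0 ?sqr_ge0.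
- rewrite invr_ge0 ler0n /=; apply: (@le_trans _ _ 1).
    by rewrite invf_le1 //; lra.
  by have := pi_ge2 R; lra.
- move=> x; rewrite -ler_norml => xn.
  exact: le_trans (fejer_kernel_ge n_gt0 xn) (ler_norm _).
Qed.

Lemma PX_fejer_kernel_ge n (c : \bar R) (t : R) : 0 < t -> (t%:E <= c)%E ->
  (PX R [set x | (c <= `|fejer_kernel n x|%:E)%E] <= (Num.sqrt (6 / t))%:E)%E.
Proof.
move=> t_gt0 tc; have pi_gt0 := pi_gt0 R.
rewrite -[X in X%:E](mulKf (lt0r_neq0 pi_gt0)) mulrC.
apply: PX_le_of_bounded.
- rewrite -[X in measurable X]setTI; apply: measurable_lee => //.
  by apply/measurable_EFinP/measurableT_comp => //; exact: measurable_fejer_kernel.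
- by rewrite mulr_ge0 ?pi_ge0 ?sqrtr_ge0.
- move=> x xpi cF; apply: (normr_le_of_fejer_kernel_ge (n := n)) t_gt0 _ _.
    by rewrite ler_norml.
  by rewrite -lee_fin (le_trans tc).
Qed.

Lemma small_ball_fejer_kernel l (b k : R) : 0 <= b -> 0 < k -> small_ball l b k ->
  b ^+ 4 * (k ^+ 2 * l.+1%:R ^+ 3) <= 81 * pi.
Proof.
move=> b0 k0 small; set M : R := l.+1%:R; have M1 : 1 <= M by rewrite ler1n.
set N := Num.sqrt (4 / 9 * M ^+ 3 / pi).
have N2 : N ^+ 2 * pi = 4 / 9 * M ^+ 3.
  rewrite sqr_sqrtr ?divfK ?lt0r_neq0 ?pi_gt0 //.
  by rewrite !mulr_ge0 ?invr_ge0 ?exprn_ge0 ?pi_ge0 //; lra.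
have N0 : 0 < N.
  by rewrite sqrtr_gt0 !mulr_gt0 ?invr_gt0 ?exprn_gt0 ?pi_gt0 //; lra.
have kN : ((k * N)%:E <= k%:E * norm2 (fejer_kernel l.+1))%E.
  rewrite EFinM; apply: lee_wpmul2l; first by rewrite lee_fin ltW.
  exact: norm2_fejer_kernel_ge.
have bN : b <= Num.sqrt (6 / (k * N)).
  have := small M (fun k => Num.sqrt 2 * (M - k%:R)) (fun=> 0).
  rewrite trig_elem_fejer_kernel -lee_fin => /le_trans; apply.
  exact: PX_fejer_kernel_ge (mulr_gt0 k0 N0) kN.
have bkN : 0 <= b ^+ 2 * (k * N).
  by rewrite mulr_ge0 ?sqr_ge0 // mulr_ge0 // ltW.
have bkN6 : b ^+ 2 * (k * N) <= 6.
  rewrite -ler_pdivlMr ?mulr_gt0 // -(sqr_sqrtr (_ : 0 <= 6 / _)); last first.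
    by rewrite divr_ge0 // ltW // mulr_gt0.
  by apply: lerXn2r; rewrite ?nnegrE ?sqrtr_ge0.
have := ler_wpM2r (pi_ge0 R) (ler_pM bkN bkN bkN6 bkN6).
have -> : b ^+ 2 * (k * N) * (b ^+ 2 * (k * N)) * pi =
    b ^+ 4 * k ^+ 2 * (N ^+ 2 * pi) by ring.
by rewrite N2; lra.
Qed.

End small_ball_fejer_kernel.

Lemma le_mul_powR_of_expr4 (R : realType) (b C k D : R) :
  0 <= b -> 0 <= C -> 0 < k -> 0 < D -> b ^+ 4 * (k ^+ 2 * D ^+ 3) <= C ^+ 4 ->
  b <= C * k `^ (- (1 / 2)) * D `^ (- (3 / 4)).
Proof.
move=> b0 C0 k0 D0 bC.
have powR_expr4 x y : 0 <= x -> (x `^ y) ^+ 4 = x `^ (y * 4).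
  by move=> x0; rewrite -powR_mulrn ?powR_ge0 // -powRrM.
rewrite -(ler_pXn2r (_ : 0 < 4)%N) ?nnegrE ?mulr_ge0 ?powR_ge0 //.
rewrite !exprMn !powR_expr4 ?(ltW k0) ?(ltW D0) //.
have -> : - (1 / 2) * 4 = - 2%:R :> R by field.
have -> : - (3 / 4) * 4 = - 3%:R :> R by field.
rewrite !powR_invn ?(ltW k0) ?(ltW D0) // -mulrA -invfM.
by rewrite ler_pdivlMr ?mulr_gt0 ?exprn_gt0.
Qed.

Theorem proposition2 (R : realType) :
  exists C : R, 0 < C /\
    forall (l : nat) (beta0 kappa0 : R),
      0 < beta0 -> 0 < kappa0 -> small_ball l beta0 kappa0 ->
      beta0 <= C * powR kappa0 (- (1/2)) * powR ((2 * l + 1)%:R) (- (3/4)).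
Proof.
(* beta0^4 kappa0^2 D^3 <= 8 * 81 * pi < 8^4 *)
exists 8; split => // l b k b0 k0 small.
have b4 := small_ball_fejer_kernel (ltW b0) k0 small.
apply: le_mul_powR_of_expr4; rewrite ?(ltW b0) ?ltr0n ?addn1 //.
have D3 : (2 * l + 1)%:R ^+ 3 <= (2 * l.+1%:R) ^+ 3 :> R.
  by rewrite ler_pXn2r ?nnegrE ?ler0n ?mulr_ge0 // -natrM ler_nat mulnS addnC.
have bk0 : 0 <= b ^+ 4 * k ^+ 2 by rewrite mulr_ge0 ?exprn_ge0 ?ltW.
have := ler_wpM2l bk0 D3; have := pihalf_lt2 R; rewrite exprMn; nra.
Qed.
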